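(* Let $p\ge1$ be an integer and run the $p$-Pass algorithm with arbitrary orderings of $V$ in each pass. Then its output $S_p$ satisfies $|S_p|\le k$ and $f(S_p)\ge\big(1-(\tfrac{p}{p+1})^p\big)\mathrm{OPT}$.
   Context: $V$ is a finite ground set with $|V|=n$; $f:2^V\to\mathbb{R}_{\ge0}$ is monotone, submodular and normalized; $f(e\mid Y)=f(Y\cup\{e\})-f(Y)$. $k\le n$ is a positive integer and $\mathrm{OPT}=\max\{f(S):S\subseteq V,|S|\le k\}$. $p$-Pass algorithm (knows $\mathrm{OPT}$): start with $S=\emptyset$; for $i=1,\dots,p$, make a pass over all elements of $V$ (in some order) and add each element $e$ to $S$ if $|S|<k$ and $f(e\mid S)\ge(\frac{p}{p+1})^i\cdot\frac{\mathrm{OPT}}{k}$; return $S$. $S_i$ denotes the set $S$ after the $i$-th pass. *)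

From HB Require Import structures.
From mathcomp Require Import all_boot all_order all_algebra.
Set Implicit Arguments. Unset Strict Implicit. Unset Printing Implicit Defensive.
Import Order.TTheory GRing.Theory Num.Theory.
Local Open Scope ring_scope.

Section PPass.
Variables (R : realFieldType) (V : finType).

Definition marg (f : {set V} -> R) (e : V) (Y : {set V}) : R := f (e |: Y) - f Y.

Definition monotone_set (f : {set V} -> R) : Prop :=
  forall A B : {set V}, A \subset B -> f A <= f B.

Definition submodular (f : {set V} -> R) : Prop :=
  forall (A B : {set V}) (e : V), A \subset B -> e \notin B -> marg f e B <= marg f e A.

Definition normalized (f : {set V} -> R) : Prop := f set0 = 0.

Definition nonneg_set (f : {set V} -> R) : Prop := forall S, 0 <= f S.

(* OPT = max { f S : |S| <= k } (nonempty range: S = set0; f >= 0, so the default 0 is harmless) *)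
Definition OPT (f : {set V} -> R) (k : nat) : R :=
  \big[Num.max/0]_(S : {set V} | (#|S| <= k)%N) f S.

Definition pass (f : {set V} -> R) (k : nat) (tau : R) (ord : seq V) (S : {set V}) : {set V} :=
  foldl (fun (S : {set V}) (e : V) => if (#|S| < k)%N && (tau <= marg f e S) then e |: S else S) S ord.

Definition threshold (p k : nat) (opt : R) (i : nat) : R :=
  (p%:R / (p.+1)%:R) ^+ i * opt / k%:R.

(* S_i : the set after the i-th pass; ords i is the ordering used in pass i (i = 1..p) *)
Fixpoint S_after (f : {set V} -> R) (k p : nat) (ords : nat -> seq V) (i : nat) : {set V} :=
  match i with
  | 0 => set0
  | i'.+1 => pass f k (threshold p k (OPT f k) i) (ords i) (S_after f k p ords i')
  end.

End PPass.

(** A pass with threshold [tau] does not decrease [f S - tau * |S|], since every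
    element it adds gains at least [tau]. A pass that ends with fewer than [k]
    elements leaves every element with marginal gain below [tau], so by
    submodularity [OPT <= f S + k * tau]. With [q = p/(p+1)] and [tau_i = q^i OPT/k],
    these two facts maintain after pass [i] the affine bound
    [f S_i >= (1 - q^i) OPT + q^(i+1) OPT (|S_i|/k - i/p)]: when [|S_i|/k >= i/p]
    this follows from the bound after pass [i-1] because [1 - q = q/p], and
    otherwise [S_i] is not full and the saturation bound applies. For [i = p]
    and [|S_p| = k] the bound is exactly [(1 - q^p) OPT]. *)
From HB Require Import structures.
From mathcomp Require Import all_boot all_order all_algebra.
From mathcomp Require Import ring lra zify.
Set Implicit Arguments. Unset Strict Implicit. Unset Printing Implicit Defensive.
Import Order.TTheory GRing.Theory Num.Theory.
Local Open Scope ring_scope.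

Section Pass.
Variables (R : realFieldType) (V : finType) (f : {set V} -> R) (k : nat) (tau : R).

Lemma setU1_id (e : V) (S : {set V}) : e \in S -> e |: S = S.
Proof. by move=> eS; apply/setUidPr; rewrite sub1set. Qed.

Lemma pass_sub ord (S : {set V}) : S \subset pass f k tau ord S.
Proof.
rewrite /pass; elim: ord S => [|e ord IH] S /=; first exact: subxx.
by apply: subset_trans (IH _); case: ifP => _ //; apply: subsetU1.
Qed.

Lemma pass_card_le ord (S : {set V}) :
  (#|S| <= k)%N -> (#|pass f k tau ord S| <= k)%N.
Proof.
rewrite /pass; elim: ord S => [|e ord IH] S //= HS; apply: IH.
by case: ifP => // /andP[lt_Sk _]; rewrite cardsU1; case: (e \in S) => /=; lia.
Qed.

Lemma pass_gain ord (S : {set V}) :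
  f S - tau * #|S|%:R <= f (pass f k tau ord S) - tau * #|pass f k tau ord S|%:R.
Proof.
rewrite /pass; elim: ord S => [|e ord IH] S //=; apply: le_trans (IH _).
case: ifP => // /andP[_ gain]; rewrite cardsU1.
have [eS|eNS] := boolP (e \in S); first by rewrite setU1_id.
by move: gain; rewrite /marg natrD mulrDr /=; lra.
Qed.

Hypothesis f_sub : submodular f.

Lemma pass_saturated ord (S : {set V}) e :
  (#|pass f k tau ord S| < k)%N -> e \in ord -> e \notin pass f k tau ord S ->
  marg f e (pass f k tau ord S) < tau.
Proof.
elim: ord S => [|x ord IH] S //=; rewrite inE.
set S1 := if _ then x |: S else S => notfull /orP[/eqP-> xN|]; last exact: IH.
have sS1 : S1 \subset pass f k tau ord S1 := pass_sub ord S1.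
have xNS1 : x \notin S1 by apply: contra xN; apply: (subsetP sS1).
have sSS1 : S \subset S1 by rewrite /S1; case: ifP => _ //; apply: subsetU1.
have lt_Sk : (#|S| < k)%N.
  by apply: leq_ltn_trans notfull; apply/subset_leq_card/(subset_trans sSS1).
have small : marg f x S < tau.
  by move: xNS1; rewrite /S1 lt_Sk /=; case: leP => // _; rewrite setU11.
by apply: le_lt_trans small; apply: f_sub => //; apply: subset_trans sS1.
Qed.

End Pass.

Section Saturation.
Variables (R : realFieldType) (V : finType) (f : {set V} -> R).
Hypotheses (f_nonneg : nonneg_set f) (f_mono : monotone_set f) (f_sub : submodular f).

Lemma saturated_bound (S : {set V}) (tau : R) :
  0 <= tau -> (forall e, e \notin S -> marg f e S < tau) ->
  forall T : {set V}, f T <= f S + #|T|%:R * tau.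
Proof.
move=> tau_ge0 sat T.
suff add_seq (s : seq V) : f (S :|: [set x in s]) <= f S + (size s)%:R * tau.
  rewrite cardE; apply: le_trans (add_seq (enum T)); rewrite set_enum.
  by apply: f_mono; apply: subsetUr.
elim: s => [|e s IH] /=.
  by rewrite mul0r addr0; apply: f_mono; apply/subsetP => x; rewrite !inE orbF.
have -> : S :|: [set x in e :: s] = e |: (S :|: [set x in s]).
  by apply/setP => x; rewrite !inE orbCA.
set X := S :|: [set x in s] in IH *.
suff : marg f e X <= tau by rewrite /marg -natr1 mulrDl mul1r; lra.
have [eX|eNX] := boolP (e \in X); first by rewrite /marg setU1_id // subrr.
have eNS : e \notin S by apply: contra eNX; rewrite inE => ->.
by apply: le_trans (ltW (sat e eNS)); apply: f_sub => //; apply: subsetUl.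
Qed.

Lemma OPT_ge0 k : 0 <= OPT f k.
Proof. by rewrite /OPT; elim/big_ind: _ => // x y x_ge0 _; rewrite le_max x_ge0. Qed.

Lemma OPT_le k (B : R) :
  0 <= B -> (forall T : {set V}, (#|T| <= k)%N -> f T <= B) -> OPT f k <= B.
Proof. by move=> B_ge0 fB; rewrite /OPT; elim/big_ind: _ => // x y; rewrite ge_max => ->. Qed.

Lemma OPT_le_pass_notfull k tau ord (S : {set V}) :
  0 <= tau -> perm_eq ord (enum V) -> (#|pass f k tau ord S| < k)%N ->
  OPT f k <= f (pass f k tau ord S) + k%:R * tau.
Proof.
move=> tau_ge0 ord_perm notfull.
apply: OPT_le => [|T card_T]; first by rewrite addr_ge0 ?mulr_ge0.
have sat e : e \notin pass f k tau ord S -> marg f e (pass f k tau ord S) < tau.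
  by apply: pass_saturated => //; rewrite (perm_mem ord_perm) mem_enum.
apply: le_trans (saturated_bound tau_ge0 sat T) _.
by rewrite lerD2l ler_wpM2r // ler_nat.
Qed.

End Saturation.

Section Guarantee.
Variables (R : realFieldType) (k p : nat) (O : R).
Hypotheses (k_gt0 : (0 < k)%N) (p_gt0 : (0 < p)%N) (O_ge0 : 0 <= O).

Let q : R := p%:R / p.+1%:R.

Definition guarantee (i n : nat) : R :=
  (1 - q ^+ i) * O + q ^+ i.+1 * O * (n%:R / k%:R - i%:R / p%:R).

Let q_ge0 : 0 <= q. Proof. by rewrite divr_ge0. Qed.

Lemma sub_frac_nat (n i : nat) :
  (n%:R / k%:R - i%:R / p%:R : R) = ((n * p)%:R - (i * k)%:R) / (k * p)%:R.
Proof. by rewrite !natrM; field; rewrite !pnatr_eq0 -!lt0n k_gt0 p_gt0. Qed.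

Lemma guarantee_affine i n m :
  guarantee i m - guarantee i n = threshold p k O i.+1 * (m%:R - n%:R).
Proof. by rewrite /guarantee /threshold -/q; field; rewrite !pnatr_eq0 -!lt0n k_gt0 p_gt0. Qed.

(* [1 - q = q / p] is the only place where the choice [q = p/(p+1)] matters. *)
Lemma guarantee_succ i n :
  guarantee i.+1 n =
  guarantee i n - q ^+ i.+1 * (1 - q) * O * (n%:R / k%:R - i.+1%:R / p%:R).
Proof.
rewrite /guarantee /q !exprS -!natr1; field.
by rewrite natr1 !pnatr_eq0 -!lt0n k_gt0 p_gt0.
Qed.

Lemma guarantee_succ_le i n :
  (i.+1 * k <= n * p)%N -> guarantee i.+1 n <= guarantee i n.
Proof.
move=> le_ikn; rewrite guarantee_succ lerBlDr lerDl.
have q_le1 : q <= 1 by rewrite ler_pdivrMr ?ltr0n // mul1r ler_nat.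
have frac_ge0 : 0 <= n%:R / k%:R - i.+1%:R / p%:R :> R.
  by rewrite sub_frac_nat divr_ge0 // subr_ge0 ler_nat.
by rewrite !mulr_ge0 ?exprn_ge0 ?q_ge0 // subr_ge0.
Qed.

Lemma guarantee_le_notfull i n :
  (n * p < i.+1 * k)%N -> guarantee i.+1 n <= (1 - q ^+ i.+1) * O.
Proof.
move=> lt_nik; rewrite /guarantee gerDl.
have frac_le0 : n%:R / k%:R - i.+1%:R / p%:R <= 0 :> R.
  by rewrite sub_frac_nat mulr_le0_ge0 ?invr_ge0 // subr_le0 ler_nat ltnW.
by apply: mulr_ge0_le0 => //; apply: mulr_ge0 => //; apply: exprn_ge0 q_ge0.
Qed.

Lemma guarantee_full : guarantee p k = (1 - q ^+ p) * O.
Proof. by rewrite /guarantee !divff ?pnatr_eq0 -?lt0n // subrr mulr0 addr0. Qed.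

End Guarantee.

Section PPassAnalysis.
Variables (R : realFieldType) (V : finType) (f : {set V} -> R) (k p : nat).
Hypotheses (f_nonneg : nonneg_set f) (f_mono : monotone_set f) (f_sub : submodular f).
Hypotheses (k_gt0 : (0 < k)%N) (p_gt0 : (0 < p)%N).
Variables (ords : nat -> seq V) (ords_perm : forall i, perm_eq (ords i) (enum V)).

Let O := OPT f k.
Let q : R := p%:R / p.+1%:R.
Let S := S_after f k p ords.
Let O_ge0 : 0 <= O := OPT_ge0 f_nonneg k.

Lemma threshold_ge0 i : 0 <= threshold p k O i.
Proof. by rewrite divr_ge0 ?mulr_ge0 ?exprn_ge0 ?divr_ge0. Qed.

Lemma S_after_card_le i : (#|S i| <= k)%N.
Proof. by elim: i => [|i IH]; rewrite /S /= ?cards0 // pass_card_le. Qed.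

Lemma S_after_notfull i :
  (#|S i.+1| < k)%N -> (1 - q ^+ i.+1) * O <= f (S i.+1).
Proof.
move=> notfull.
have := OPT_le_pass_notfull f_nonneg f_mono f_sub (threshold_ge0 i.+1) (ords_perm i.+1) notfull.
have -> : k%:R * threshold p k O i.+1 = q ^+ i.+1 * O.
  by rewrite /threshold; field; rewrite pnatr_eq0 -lt0n.
rewrite -/(S i.+1) -/O; lra.
Qed.

Lemma S_after_guarantee i : (i <= p)%N -> guarantee k p O i #|S i| <= f (S i).
Proof.
elim: i => [_|i IH lt_ip].
  by rewrite /guarantee /S /= cards0 expr0 subrr mul0r add0r !mul0r subrr mulr0 f_nonneg.
have gain : guarantee k p O i #|S i.+1| <= f (S i.+1).
  have := pass_gain f k (threshold p k O i.+1) (ords i.+1) (S i).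
  have := guarantee_affine O k_gt0 p_gt0 i #|S i| #|S i.+1|.
  by have := IH (ltnW lt_ip); rewrite -/(S i.+1); lra.
have [le_ikn|lt_nik] := leqP (i.+1 * k) (#|S i.+1| * p).
  exact: le_trans (guarantee_succ_le k_gt0 p_gt0 O_ge0 le_ikn) gain.
apply: le_trans (guarantee_le_notfull k_gt0 p_gt0 O_ge0 lt_nik) _.
by apply: S_after_notfull; nia.
Qed.

End PPassAnalysis.

Theorem mainTheorem19 (R : realFieldType) (V : finType) (f : {set V} -> R) (k p : nat)
  (f_nonneg : nonneg_set f) (f_mono : monotone_set f) (f_sub : submodular f)
  (f_norm : normalized f)
  (k_pos : (0 < k)%N) (k_le_n : (k <= #|V|)%N) (p_pos : (1 <= p)%N)
  (ords : nat -> seq V) (ords_perm : forall i, perm_eq (ords i) (enum V)) :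
  (#|S_after f k p ords p| <= k)%N /\
  (1 - (p%:R / (p.+1)%:R) ^+ p) * OPT f k <= f (S_after f k p ords p).
Proof.
have card_le := S_after_card_le f k p ords p.
split=> //; have [notfull|full] := ltnP #|S_after f k p ords p| k.
  have := S_after_notfull f_nonneg f_mono f_sub k_pos ords_perm (i := p.-1).
  by rewrite prednK //; apply.
have eq_Sk : #|S_after f k p ords p| = k by apply/anti_leq/andP.
have := S_after_guarantee f_nonneg f_mono f_sub k_pos p_pos ords_perm (leqnn p).
by rewrite eq_Sk guarantee_full.
Qed.
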